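(* $$\max_{U_1,U_2\in\mathcal R}P(U_1,U_2)=\frac{3}{50}\left(9+\sqrt6\right)=0.004\left(\sqrt{393-48\sqrt6}+138+7\sqrt6\right)\approx 0.687.$$
   Context: Basis of $\mathbb C^3$: $|1\rangle,|2\rangle,|3\rangle$ (standard basis). Spin-1 matrices in this basis: $J_y=\frac{1}{\sqrt2}\begin{pmatrix}0&-i&0\\ i&0&-i\\ 0&i&0\end{pmatrix}$, $J_z=\mathrm{diag}(1,0,-1)$. Define $Z(\alpha,\beta,\gamma)=e^{-i\alpha J_z}e^{-i\beta J_y}e^{-i\gamma J_z}$. Let $\mathcal R=\{Z(\alpha,\beta,\gamma):\alpha,\beta,\gamma\in\mathbb R\}\subset U(3)$. For $j\in\{1,2\}$ let $P_j=|j\rangle\langle j|$ and $\mathcal M_j(\rho)=P_j\rho P_j+(\mathbb I-P_j)\rho(\mathbb I-P_j)$. Define $P(U_1,U_2)=\langle 2|U_2\,\mathcal M_1(U_1|1\rangle\langle 1|U_1^\dagger)\,U_2^\dagger|2\rangle$ for $U_1,U_2\in\mathcal R$. *)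

From HB Require Import structures.
From mathcomp Require Import all_boot all_order all_algebra.
From mathcomp Require Import reals topology normedtype sequences Rstruct Rstruct_topology.
From mathcomp Require Import complex.

Set Implicit Arguments.
Unset Strict Implicit.
Unset Printing Implicit Defensive.

Import Order.TTheory GRing.Theory Num.Theory.
Local Open Scope ring_scope.
Local Open Scope complex_scope.

Notation RR := Rdefinitions.R.
Notation CC := (complex RR).

(* Matrix exponential, defined by its power series
   exp M = sum_k M^k / k!, the limit being taken entrywise and
   (as for any limit in C = R^2) on real and imaginary parts. *)
Definition expm_psum (M : 'M[CC]_3) (N : nat) : 'M[CC]_3 :=
  \sum_(k < N) ((k`!)%:R)^-1 *: (M ^+ k).

Definition expm (M : 'M[CC]_3) : 'M[CC]_3 :=
  \matrix_(i, j)
    ((limn (fun N => @complex.Re RR (expm_psum M N i j)))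
       +i* (limn (fun N => @complex.Im RR (expm_psum M N i j)))).

(* Standard basis |1>,|2>,|3>  ~  indices 0,1,2 of 'I_3. *)
Definition e1 : 'I_3 := @Ordinal 3 0 erefl.
Definition e2 : 'I_3 := @Ordinal 3 1 erefl.
Definition e3 : 'I_3 := @Ordinal 3 2 erefl.

Definition inv_sqrt2 : CC := ((Num.sqrt (2 : RR))^-1)%:C.

Definition Jy : 'M[CC]_3 :=
  inv_sqrt2 *: \matrix_(i < 3, j < 3)
    (if (val i == 0%N) && (val j == 1%N) then - 'i
     else if (val i == 1%N) && (val j == 0%N) then 'i
     else if (val i == 1%N) && (val j == 2%N) then - 'i
     else if (val i == 2%N) && (val j == 1%N) then 'i
     else 0).

Definition Jz : 'M[CC]_3 :=
  \matrix_(i < 3, j < 3)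
    (if (val i == 0%N) && (val j == 0%N) then 1
     else if (val i == 2%N) && (val j == 2%N) then -1
     else 0).

Definition Zrot (a b g : RR) : 'M[CC]_3 :=
  expm ((- 'i * a%:C) *: Jz) *m expm ((- 'i * b%:C) *: Jy)
    *m expm ((- 'i * g%:C) *: Jz).

Definition in_calR (U : 'M[CC]_3) : Prop :=
  exists a b g : RR, U = Zrot a b g.

Definition adj (A : 'M[CC]_3) : 'M[CC]_3 := (map_mx (@conjc RR) A)^T.

Definition proj (j : 'I_3) : 'M[CC]_3 :=
  \matrix_(k < 3, l < 3) (if (k == j) && (l == j) then 1 else 0).

Definition Mchan (j : 'I_3) (rho : 'M[CC]_3) : 'M[CC]_3 :=
  proj j *m rho *m proj j + (1%:M - proj j) *m rho *m (1%:M - proj j).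

Definition Pval (U1 U2 : 'M[CC]_3) : CC :=
  (U2 *m Mchan e1 (U1 *m proj e1 *m adj U1) *m adj U2) e2 e2.

From HB Require Import structures.
From mathcomp Require Import all_boot all_order all_algebra.
From mathcomp Require Import reals topology normedtype sequences Rstruct Rstruct_topology.
From mathcomp Require Import complex trigo.
From mathcomp.algebra_tactics Require Import ring lra.

(* Since J_z^3 = J_z and J_y^3 = J_y, the exponential series collapses to
   e^{-itJ} = 1 - J^2 - i sin t J + cos t J^2, so Z(a,b,g) has entries
   e^{-ima} d_{mn}(b) e^{-ing} with d(b) Wigner's real small-d matrix.
   Expanding the measurement channel,
   P = |U2_21 U1_11|^2 + |U2_22 U1_21 + U2_23 U1_31|^2, and the triangle
   inequality bounds P by Q(c, p, X, Y) / 8, where c = cos b1, p = |sin b1|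
   and (X, Y) = (|cos b2|, |sin b2|) is a unit vector.  For fixed c, Q is a
   quadratic form in (X, Y); an explicit sum-of-squares certificate shows
   that its top eigenvalue never exceeds L = (108 + 12 sqrt 6) / 25, with
   equality exactly at c = (1 - sqrt 6) / 5.  Choosing b1 there and (X, Y)
   along the top eigenvector, with all phases zero, attains L / 8. *)

Set Implicit Arguments.
Unset Strict Implicit.
Unset Printing Implicit Defensive.

Import Order.TTheory GRing.Theory Num.Theory numFieldNormedType.Exports.
Local Open Scope ring_scope.
Local Open Scope complex_scope.

Lemma half_pred_odd k : odd k -> k.-1./2 = k./2.
Proof. by case: k => //= k; rewrite uphalf_half; case: (odd k). Qed.

Lemma expr_cubeid (R : pzSemiRingType) (M : R) : M * M * M = M ->
  forall k, M ^+ k = if k == 0%N then 1 else if odd k then M else M * M.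
Proof.
move=> M3; elim=> [|k IH] //=; rewrite exprS IH.
case: k IH => [|k] _ /=; first by rewrite mulr1.
by case: (odd k) => //=; rewrite mulrA.
Qed.

Section PowerSeries.
Context {R : realType}.
Local Open Scope classical_set_scope.

Lemma exprNi k : (- 'i : R[i]) ^+ k = (if odd k then - 'i else 1) * ((-1) ^+ k./2)%:C.
Proof.
elim: k => [|k IH]; first by rewrite expr0 mul1r.
rewrite exprSr IH /= uphalf_half; case: (odd k) => /=; last by rewrite add0n; ring.
rewrite exprS rmorphM rmorphN1 /=.
have i2 : ('i : R[i]) * 'i = -1 by rewrite -expr2 sqr_i.
by rewrite -[RHS]mul1r -i2; ring.
Qed.

Definition odd_psum (t : R[i]) N := \sum_(k < N) (odd k)%:R * t ^+ k / (k`!)%:R.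
Definition even_psum (t : R[i]) N := \sum_(k < N) (~~ odd k)%:R * t ^+ k / (k`!)%:R.

Lemma odd_psumNi (b : R) N : odd_psum (- 'i * b%:C) N = - 'i * (series (sin_coeff b) N)%:C.
Proof.
rewrite /odd_psum seriesEord rmorph_sum mulr_sumr; apply: eq_bigr => k _.
rewrite /sin_coeff /= exprMn exprNi; case ok: (odd k) => /=; last by rewrite !mul0r rmorph0 mulr0.
rewrite half_pred_odd // !rmorphM fmorphV !rmorphXn rmorphN1 !rmorph_nat /=; ring.
Qed.

Lemma even_psumNi (b : R) N : even_psum (- 'i * b%:C) N = (series (cos_coeff b) N)%:C.
Proof.
rewrite /even_psum seriesEord rmorph_sum; apply: eq_bigr => k _.
rewrite /cos_coeff /= exprMn exprNi; case: (odd k) => /=; first by rewrite !mul0r rmorph0.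
rewrite !rmorphM fmorphV !rmorphXn rmorphN1 !rmorph_nat /=; ring.
Qed.

Lemma cvg_trig_comb (b A B C : R) :
  (fun N => (0 < N)%:R * A + series (sin_coeff b) N * B + series (cos_coeff b) N * C)
    @ \oo --> A + sin b * B + cos b * C.
Proof.
rewrite -cvg_shiftS /=.
have sin_cvg : series (sin_coeff b) @ \oo --> sin b.
  by rewrite unlock; exact: is_cvg_series_sin_coeff.
have cos_cvg : series (cos_coeff b) @ \oo --> cos b.
  by rewrite unlock; exact: is_cvg_series_cos_coeff.
rewrite (eq_cvg _ _ (fun N => congr1 (fun u => u + _ + _) (mul1r A))).
apply: cvgD; last by apply: cvgM; [rewrite (cvg_shiftS (series _)) | exact: cvg_cst].
apply: cvgD; first exact: cvg_cst.
by apply: cvgM; [rewrite (cvg_shiftS (series _)) | exact: cvg_cst].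
Qed.

Lemma Re_trig_comb (q s c : R) (K0 K1 K2 : R[i]) :
  complex.Re (q%:C * K0 + (- 'i * s%:C) * K1 + c%:C * K2) =
  q * complex.Re K0 + s * complex.Im K1 + c * complex.Re K2.
Proof. by case: K0 K1 K2 => [a0 b0] [a1 b1] [a2 b2] /=; ring. Qed.

Lemma Im_trig_comb (q s c : R) (K0 K1 K2 : R[i]) :
  complex.Im (q%:C * K0 + (- 'i * s%:C) * K1 + c%:C * K2) =
  q * complex.Im K0 + s * (- complex.Re K1) + c * complex.Im K2.
Proof. by case: K0 K1 K2 => [a0 b0] [a1 b1] [a2 b2] /=; ring. Qed.

Lemma limn_Re_Im (u : nat -> R[i]) (z : R[i]) :
  (fun N => complex.Re (u N)) @ \oo --> complex.Re z ->
  (fun N => complex.Im (u N)) @ \oo --> complex.Im z ->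
  limn (fun N => complex.Re (u N)) +i* limn (fun N => complex.Im (u N)) = z.
Proof. by move=> /cvg_lim-> // /cvg_lim-> //; case: z. Qed.

End PowerSeries.

Lemma expm_psum_cubeid (M : 'M[CC]_3) (t : CC) N i j : M * M * M = M ->
  expm_psum (t *: M) N i j = (0 < N)%:R * (1 - M * M) i j + odd_psum t N * M i j
     + even_psum t N * (M * M) i j.
Proof.
move=> M3; rewrite /expm_psum /odd_psum /even_psum.
elim: N => [|N IH]; first by rewrite !big_ord0 mxE !mul0r !addr0.
rewrite !big_ord_recr /= mxE IH !mxE exprZn (expr_cubeid M3).
case: N IH => [|N] _ /=; first by rewrite !big_ord0 !mxE fact0 invr1 expr0; ring.
by case: (odd N); rewrite /= !mxE; ring.
Qed.

Lemma expm_cubeid (M : 'M[CC]_3) (b : RR) : M * M * M = M ->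
  expm ((- 'i * b%:C) *: M) =
  (1 - M * M) + (- 'i * (sin b)%:C) *: M + (cos b)%:C *: (M * M).
Proof.
move=> M3; apply/matrixP => i j.
have -> : ((1 - M * M) + (- 'i * (sin b)%:C) *: M + (cos b)%:C *: (M * M)) i j =
    1%:C * (1 - M * M) i j + (- 'i * (sin b)%:C) * M i j + (cos b)%:C * (M * M) i j.
  by rewrite mul1r [LHS]mxE [X in X + _]mxE !mxE.
rewrite mxE.
have psumE N : expm_psum ((- 'i * b%:C) *: M) N i j =
    ((0 < N)%:R)%:C * (1 - M * M) i j + (- 'i * (series (sin_coeff b) N)%:C) * M i j
    + (series (cos_coeff b) N)%:C * (M * M) i j.
  by rewrite expm_psum_cubeid // odd_psumNi even_psumNi rmorph_nat.
apply: limn_Re_Im.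
- rewrite (eq_cvg _ _ (fun N => congr1 (@complex.Re RR) (psumE N))).
  under eq_cvg do rewrite Re_trig_comb.
  by rewrite Re_trig_comb mul1r; exact: cvg_trig_comb.
- rewrite (eq_cvg _ _ (fun N => congr1 (@complex.Im RR) (psumE N))).
  under eq_cvg do rewrite Im_trig_comb.
  rewrite Im_trig_comb mul1r; exact: cvg_trig_comb.
Qed.

Ltac complex_ring := apply/eqP; rewrite eq_complex /=; apply/andP; split; apply/eqP; ring.

Ltac complex_field :=
  apply/eqP; rewrite eq_complex /=; apply/andP; split; apply/eqP; field; rewrite ?pnatr_eq0 //.

Ltac entrywise :=
  let i := fresh "i" in let j := fresh "j" in
  apply/matrixP => i j; rewrite !(mxE, big_ord_recl, big_ord0);
  case: i => [[|[|[|?]]] ?] //; case: j => [[|[|[|?]]] ?] //=.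

Lemma Jz_cubeid : Jz * Jz * Jz = Jz.
Proof. by entrywise; complex_ring. Qed.

Definition sqrt2_Jy : 'M[CC]_3 := \matrix_(i < 3, j < 3)
    (if (val i == 0%N) && (val j == 1%N) then - 'i
     else if (val i == 1%N) && (val j == 0%N) then 'i
     else if (val i == 1%N) && (val j == 2%N) then - 'i
     else if (val i == 2%N) && (val j == 1%N) then 'i
     else 0).

Lemma sqrt2_Jy_cube : sqrt2_Jy * sqrt2_Jy * sqrt2_Jy = 2%:R *: sqrt2_Jy.
Proof. by entrywise; complex_ring. Qed.

Local Notation isqrt2 := (Num.sqrt (2 : RR))^-1.

Lemma isqrt2_gt0 : 0 < isqrt2.
Proof. by rewrite invr_gt0 sqrtr_gt0. Qed.

Lemma isqrt2_sqr : isqrt2 * isqrt2 = 2^-1.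
Proof. by rewrite -expr2 exprVn sqr_sqrtr. Qed.

Lemma Jy_cubeid : Jy * Jy * Jy = Jy.
Proof.
have -> : Jy = inv_sqrt2 *: sqrt2_Jy by [].
rewrite -!scalerAl -!scalerAr -scalerAl !scalerA sqrt2_Jy_cube scalerA.
congr (_ *: _); rewrite /inv_sqrt2 -!rmorphM -(rmorph_nat (real_complex RR)) -rmorphM /=.
by rewrite isqrt2_sqr mulrAC mulVf ?pnatr_eq0 // mul1r.
Qed.

(* [phase a k] is e^{-ima} for the J_z eigenvalue m = 1, 0, -1 of |k>, and
   [wigner_d b] is Wigner's small d-matrix d^1(b), the matrix of e^{-ibJ_y}. *)
Definition phase (a : RR) (k : 'I_3) : CC :=
  if val k == 0%N then cos a +i* - sin a
  else if val k == 1%N then 1 else cos a +i* sin a.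

Definition wigner_d (b : RR) (i j : 'I_3) : RR :=
  let c := cos b in let s := sin b in
  if val i == 0%N then
    (if val j == 0%N then (1 + c) / 2
     else if val j == 1%N then - s * isqrt2 else (1 - c) / 2)
  else if val i == 1%N then
    (if val j == 0%N then s * isqrt2 else if val j == 1%N then c else - s * isqrt2)
  else
    (if val j == 0%N then (1 - c) / 2
     else if val j == 1%N then s * isqrt2 else (1 + c) / 2).

Lemma expm_Jz a :
  expm ((- 'i * a%:C) *: Jz) = \matrix_(i, j) (if i == j then phase a i else 0).
Proof. by rewrite expm_cubeid ?Jz_cubeid //; entrywise; complex_ring. Qed.

Lemma expm_Jy b : expm ((- 'i * b%:C) *: Jy) = \matrix_(i, j) (wigner_d b i j)%:C.
Proof.
rewrite expm_cubeid ?Jy_cubeid //.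
have -> : Jy = inv_sqrt2 *: sqrt2_Jy by [].
rewrite -scalerAl -scalerAr scalerA /inv_sqrt2 -rmorphM isqrt2_sqr.
by entrywise; rewrite /wigner_d /=; move: isqrt2 => r; complex_field.
Qed.

Lemma Zrot_entry a b g i j : Zrot a b g i j = phase a i * (wigner_d b i j)%:C * phase g j.
Proof.
rewrite /Zrot expm_Jz expm_Jy expm_Jz !(mxE, big_ord_recl, big_ord0).
by case: i => [[|[|[|?]]] ?] //; case: j => [[|[|[|?]]] ?] //=;
  rewrite /phase /wigner_d /=; ring.
Qed.

Lemma e1E : e1 = ord0. Proof. exact: val_inj. Qed.
Lemma e2E : e2 = lift ord0 ord0. Proof. exact: val_inj. Qed.
Lemma e3E : e3 = lift ord0 (lift ord0 ord0). Proof. exact: val_inj. Qed.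

Lemma ord3P (k : 'I_3) : [\/ k = ord0, k = lift ord0 ord0 | k = lift ord0 (lift ord0 ord0)].
Proof.
by case: k => [[|[|[|?]]] ?] //; [apply: Or31 | apply: Or32 | apply: Or33]; apply: val_inj.
Qed.

Lemma rank1_entry (U : 'M[CC]_3) m n : (U *m proj e1 *m adj U) m n = U m e1 * (U n e1)^*.
Proof. by rewrite !(mxE, big_ord_recl, big_ord0) /= e1E; ring. Qed.

Lemma Mchan1_entry (X : 'M[CC]_3) k l :
  Mchan e1 X k l = if (val k == 0%N) == (val l == 0%N) then X k l else 0.
Proof.
by case: (ord3P k) => ->; case: (ord3P l) => ->;
  rewrite /Mchan /proj !(mxE, big_ord_recl, big_ord0) /=; ring.
Qed.

Lemma Pval_expand U1 U2 : Pval U1 U2 =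
  (U2 e2 e1 * U1 e1 e1) * (U2 e2 e1 * U1 e1 e1)^* +
  (U2 e2 e2 * U1 e2 e1 + U2 e2 e3 * U1 e3 e1) *
  (U2 e2 e2 * U1 e2 e1 + U2 e2 e3 * U1 e3 e1)^*.
Proof.
rewrite /Pval; have := Mchan1_entry (U1 *m proj e1 *m adj U1); have := rank1_entry U1.
move: (U1 *m _ *m _) => X HX; move: (Mchan e1 X) => Y HY.
rewrite !(mxE, big_ord_recl, big_ord0) !HY /= !HX !rmorphD !rmorphM /= e1E e2E e3E; ring.
Qed.

Section QuadraticForm.
Variables (R : realFieldType) (q : R).
Hypotheses (q_sqr : q * q = 6) (q_ge0 : 0 <= q).

Definition quad_form (c p X Y : R) := Y ^+ 2 * (1 + c) ^+ 2 + (2 * X * p + Y * (1 - c)) ^+ 2.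

Let Lmax := (108 + 12 * q) / 25.

(* [gap c p >= 0] says that Lmax dominates the quadratic form in (X, Y); on the
   circle p^2 + c^2 = 1 it vanishes to second order at c = (1 - q) / 5. *)
Let gap c p := (Lmax - 4 * p ^+ 2) * (Lmax - 2 - 2 * c ^+ 2) - 4 * p ^+ 2 * (1 - c) ^+ 2.

Lemma quad_form_gap c p X Y :
  (Lmax - 4 * p ^+ 2) * (Lmax * (X ^+ 2 + Y ^+ 2) - quad_form c p X Y) =
  ((Lmax - 4 * p ^+ 2) * X - 2 * p * (1 - c) * Y) ^+ 2 + gap c p * Y ^+ 2.
Proof. by rewrite /quad_form /gap; ring. Qed.

Let gap_coeff c := -4 * c ^+ 2 + (-48 + 8 * q) / 5 * c + (52 + 128 * q) / 25.

Lemma gapE c p : p ^+ 2 + c ^+ 2 = 1 -> gap c p = (c - (1 - q) / 5) ^+ 2 * gap_coeff c.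
Proof.
move=> pc1.
pose T := 348/625 - 128/625 * q + (-192/125 - 8/125 * q) * c - 12/25 * c ^+ 2.
pose B := -4 * (Lmax - 2 - 2 * c ^+ 2) - 4 * (1 - c) ^+ 2.
have -> : gap c p = (c - (1 - q) / 5) ^+ 2 * gap_coeff c + (q * q - 6) * T
    + (p ^+ 2 + c ^+ 2 - 1) * B by rewrite /gap /gap_coeff /T /B /Lmax; field.
by rewrite q_sqr pc1 !subrr !mul0r !addr0.
Qed.

Lemma gap_coeff_ge0 c : -1 <= c <= 1 -> 0 <= gap_coeff c.
Proof.
move=> /andP[c_ge c_le]; have q_gt2 : 2 < q by have := q_sqr; have := q_ge0; nra.
have -> : gap_coeff c = ((1 + c) * ((-288 + 168 * q) / 25)
    + (1 - c) * ((192 + 88 * q) / 25)) / 2 + 4 * (1 - c) * (1 + c).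
  by rewrite /gap_coeff; field.
have t1 : 0 <= (1 + c) * ((-288 + 168 * q) / 25) by apply: mulr_ge0; lra.
have t2 : 0 <= (1 - c) * ((192 + 88 * q) / 25) by apply: mulr_ge0; lra.
have t3 : 0 <= (1 - c) * (1 + c) by apply: mulr_ge0; lra.
lra.
Qed.

Lemma Lmax_gt c p : p ^+ 2 + c ^+ 2 = 1 -> 4 * p ^+ 2 < Lmax.
Proof. by move=> pc1; have := q_ge0; rewrite /Lmax; nra. Qed.

Lemma quad_form_le c p X Y : p ^+ 2 + c ^+ 2 = 1 -> X ^+ 2 + Y ^+ 2 = 1 ->
  quad_form c p X Y <= Lmax.
Proof.
move=> pc1 XY1; have c_bnd : -1 <= c <= 1 by apply/andP; split; nra.
have := quad_form_gap c p X Y; rewrite XY1 mulr1 gapE // => gapE.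
have Lp_gt0 : 0 < Lmax - 4 * p ^+ 2 by rewrite subr_gt0 (Lmax_gt pc1).
rewrite -subr_ge0 -(pmulr_rge0 _ Lp_gt0) gapE.
rewrite addr_ge0 ?sqr_ge0 // mulr_ge0 ?sqr_ge0 // mulr_ge0 ?sqr_ge0 //.
exact: gap_coeff_ge0.
Qed.

Lemma quad_form_max c p X Y : p ^+ 2 + c ^+ 2 = 1 -> X ^+ 2 + Y ^+ 2 = 1 ->
  c = (1 - q) / 5 -> (Lmax - 4 * p ^+ 2) * X = 2 * p * (1 - c) * Y ->
  quad_form c p X Y = Lmax.
Proof.
move=> pc1 XY1 cE eig.
have := quad_form_gap c p X Y; rewrite XY1 mulr1 gapE // eig subrr cE subrr.
rewrite expr0n /= !mul0r addr0 => /eqP; rewrite mulf_eq0 subr_eq0.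
by rewrite (gt_eqF (Lmax_gt pc1)) /= subr_eq0 => /eqP ->.
Qed.
End QuadraticForm.

Lemma sqrt6_sqr : Num.sqrt (6 : RR) * Num.sqrt 6 = 6.
Proof. by rewrite -expr2 sqr_sqrtr. Qed.

Lemma quad_form_isqrt2 (c s X Y : RR) :
  (Y * isqrt2 * ((1 + c) / 2)) ^+ 2 + (X * (s * isqrt2) + Y * isqrt2 * ((1 - c) / 2)) ^+ 2 =
  quad_form c s X Y / 8.
Proof.
move: isqrt2_sqr; move: isqrt2 => r r2.
transitivity (r * r / 4 * quad_form c s X Y); first by rewrite /quad_form; field.
by rewrite r2; field.
Qed.

Lemma wigner_bound b1 b2 :
  (`|wigner_d b2 e2 e1| * `|wigner_d b1 e1 e1|) ^+ 2 +
  (`|wigner_d b2 e2 e2| * `|wigner_d b1 e2 e1| +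
   `|wigner_d b2 e2 e3| * `|wigner_d b1 e3 e1|) ^+ 2 <= 3 / 50 * (9 + Num.sqrt 6).
Proof.
have half_ge0 : 0 <= 2^-1 :> RR by rewrite invr_ge0.
rewrite /wigner_d /= !normrM normrN (gtr0_norm isqrt2_gt0) !(ger0_norm half_ge0).
rewrite (ger0_norm (_ : 0 <= 1 + cos b1)) ?(ger0_norm (_ : 0 <= 1 - cos b1));
  [| by rewrite subr_ge0 cos_le1 | by rewrite -lerBlDl sub0r cos_geN1].
rewrite quad_form_isqrt2.
have := @quad_form_le _ _ sqrt6_sqr (sqrtr_ge0 6) (cos b1) `|sin b1| `|cos b2| `|sin b2|.
rewrite !real_normK ?num_real // [_ + cos b1 ^+ 2]addrC !cos2Dsin2 => /(_ erefl erefl).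
lra.
Qed.

Local Notation normc := (@ComplexField.Normc.normc RR).

Lemma normc_ge0 (x : CC) : 0 <= normc x.
Proof. by case: x => a b; apply: sqrtr_ge0. Qed.

Lemma mulc_conj (x : CC) : x * x^* = (normc x ^+ 2)%:C.
Proof. by case: x => a b /=; rewrite sqr_sqrtr ?addr_ge0 ?sqr_ge0 //; complex_ring. Qed.

Lemma normc_real (x : RR) : normc x%:C = `|x|.
Proof. by rewrite /= expr0n /= addr0 sqrtr_sqr. Qed.

Lemma normc_phase a k : normc (phase a k) = 1.
Proof.
rewrite /phase; case: ifP => _; first by rewrite /= sqrrN cos2Dsin2 sqrtr1.
by case: ifP => _; [exact: ComplexField.Normc.normc1 | rewrite /= cos2Dsin2 sqrtr1].
Qed.

Lemma Pval_Zrot_le a1 b1 g1 a2 b2 g2 :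
  Pval (Zrot a1 b1 g1) (Zrot a2 b2 g2) <= (3 / 50 * (9 + Num.sqrt 6))%:C.
Proof.
(* Rewriting with [Zrot_entry] in place lets unification unfold the matrix
   exponentials, so the two matrices are generalized first. *)
have := Zrot_entry a1 b1 g1; have := Zrot_entry a2 b2 g2.
move: (Zrot a1 b1 g1) (Zrot a2 b2 g2) => U1 U2 U2E U1E.
rewrite Pval_expand !U1E !U2E !mulc_conj -rmorphD lecR.
have normE := (ComplexField.Normc.normcM, normc_phase, normc_real, mul1r, mulr1).
rewrite !normE; apply: le_trans (wigner_bound b1 b2); rewrite lerD2l.
set z := _ + _; have z_ge0 := normc_ge0 z.
have : normc z <= `|wigner_d b2 e2 e2| * `|wigner_d b1 e2 e1|
    + `|wigner_d b2 e2 e3| * `|wigner_d b1 e3 e1|.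
  by rewrite /z; apply: le_trans (le_normcD _ _) _; rewrite !normE.
by move=> hz; nra.
Qed.

Lemma phase0 k : phase 0 k = 1.
Proof. by rewrite /phase cos0 sin0 oppr0; case: ifP => //; case: ifP. Qed.

Lemma Pval_Zrot0 b1 b2 : Pval (Zrot 0 b1 0) (Zrot 0 b2 0) =
  ((wigner_d b2 e2 e1 * wigner_d b1 e1 e1) ^+ 2 +
   (wigner_d b2 e2 e2 * wigner_d b1 e2 e1 + wigner_d b2 e2 e3 * wigner_d b1 e3 e1) ^+ 2)%:C.
Proof.
have := Zrot_entry 0 b1 0; have := Zrot_entry 0 b2 0.
move: (Zrot 0 b1 0) (Zrot 0 b2 0) => U1 U2 U2E U1E.
rewrite Pval_expand !U1E !U2E !phase0 !mul1r !mulr1.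
move: (wigner_d b2 e2 e1) (wigner_d b1 e1 e1) (wigner_d b2 e2 e2) (wigner_d b1 e2 e1).
move: (wigner_d b2 e2 e3) (wigner_d b1 e3 e1) => x1 x2 x3 x4 x5 x6.
complex_ring.
Qed.

Lemma exists_angle (X Y : RR) : X ^+ 2 + Y ^+ 2 = 1 -> 0 <= Y ->
  exists b, cos b = X /\ sin b = - Y.
Proof.
move=> XY1 Y_ge0; have X_bnd : -1 <= X <= 1 by apply/andP; split; nra.
exists (- acos X); rewrite cosN sinN acosK ?in_itv //; split => //.
by rewrite sin_acos // -XY1 addrAC subrr add0r sqrtr_sqr ger0_norm.
Qed.

Lemma exists_unit_on_line (u v : RR) : 0 < v ->
  exists X Y, [/\ X ^+ 2 + Y ^+ 2 = 1, 0 <= Y & v * X = u * Y].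
Proof.
move=> v_gt0; set N := Num.sqrt (u ^+ 2 + v ^+ 2).
have N_gt0 : 0 < N by rewrite sqrtr_gt0 ltr_wpDl ?sqr_ge0 ?exprn_gt0.
exists (u / N), (v / N); split.
- rewrite !expr_div_n -mulrDl sqr_sqrtr ?addr_ge0 ?sqr_ge0 // divff //.
  by rewrite gt_eqF // ltr_wpDl ?sqr_ge0 ?exprn_gt0.
- by rewrite divr_ge0 // ltW.
- by rewrite mulrCA.
Qed.

Lemma Pval_Zrot_attains : exists b1 b2,
  Pval (Zrot 0 b1 0) (Zrot 0 b2 0) = (3 / 50 * (9 + Num.sqrt 6))%:C.
Proof.
set q := Num.sqrt (6 : RR); have q_sqr : q * q = 6 := sqrt6_sqr.
have q_ge0 : 0 <= q := sqrtr_ge0 6.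
set c := (1 - q) / 5.
have c_bnd : c ^+ 2 <= 1 by rewrite /c; nra.
have [b1 [cos_b1 sin_b1]] : exists b1, cos b1 = c /\ sin b1 = - Num.sqrt (1 - c ^+ 2).
  by apply: exists_angle; rewrite ?sqrtr_ge0 // sqr_sqrtr ?subr_ge0 // addrC subrK.
set p := sin b1; have pc1 : p ^+ 2 + c ^+ 2 = 1 by rewrite -cos_b1 addrC cos2Dsin2.
have La_gt0 : 0 < (108 + 12 * q) / 25 - 4 * p ^+ 2.
  by rewrite subr_gt0 (Lmax_gt q_ge0 pc1).
(* (X, Y) is the top eigenvector of the quadratic form at this c. *)
have [X [Y [XY1 Y_ge0 eig]]] := exists_unit_on_line (2 * p * (1 - c)) La_gt0.
have [b2 [cos_b2 sin_b2]] := exists_angle XY1 Y_ge0.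
exists b1, b2; rewrite Pval_Zrot0; congr (_%:C).
transitivity (quad_form c p X Y / 8).
  by rewrite -quad_form_isqrt2 /wigner_d /= cos_b1 cos_b2 sin_b2 -/p; ring.
by rewrite (quad_form_max q_sqr q_ge0 pc1 XY1 erefl eig); field.
Qed.

Lemma sqrt6_facts (q : RR) : q * q = 6 -> 0 <= q ->
  3 / 50 * (9 + q) = 4 / 1000 * (Num.sqrt (393 - 48 * q) + 138 + 7 * q) /\
  686 / 1000 < 3 / 50 * (9 + q) < 688 / 1000.
Proof.
move=> q_sqr q_ge0; have q_gt2 : 2 < q by nra.
have -> : 393 - 48 * q = (8 * q - 3) ^+ 2.
  have -> : (8 * q - 3) ^+ 2 = 64 * (q * q) - 48 * q + 9 by ring.
  by rewrite q_sqr; ring.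
rewrite sqrtr_sqr ger0_norm; last by lra.
by split; [field | apply/andP; split; nra].
Qed.

Theorem corollary1 :
  let c : RR := 3 / 50 * (9 + Num.sqrt 6) in
  (exists U1 U2 : 'M[CC]_3,
      in_calR U1 /\ in_calR U2 /\ Pval U1 U2 = c%:C) /\
  (forall U1 U2 : 'M[CC]_3,
      in_calR U1 -> in_calR U2 -> Pval U1 U2 <= c%:C) /\
  c = 4 / 1000 * (Num.sqrt (393 - 48 * Num.sqrt 6) + 138 + 7 * Num.sqrt 6) /\
  686 / 1000 < c < 688 / 1000.
Proof.
move=> c; split.
  have [b1 [b2 attain]] := Pval_Zrot_attains.
  exists (Zrot 0 b1 0), (Zrot 0 b2 0).
  by split; [exists 0, b1, 0 | split; [exists 0, b2, 0 |]].
split; first by move=> _ _ [a1 [b1 [g1 ->]]] [a2 [b2 [g2 ->]]]; exact: Pval_Zrot_le.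
exact: sqrt6_facts sqrt6_sqr (sqrtr_ge0 6).
Qed.
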